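(* Let $m\ge 1$ and let $L$ be either $L'$ or $\mathcal{R}^*$ (notation as in the context). If $a\in\mathcal{R}$ satisfies $Tr(ax)=0$ for all $x\in L$, then $a=0$.
   Context: Let $R=\mathbb{F}_3+u\mathbb{F}_3+u^2\mathbb{F}_3$ with $u^3=1$, i.e. $R=\mathbb{F}_3[u]/(u^3-1)$. For a positive integer $m$, let $\mathcal{R}=\mathbb{F}_{3^m}+u\mathbb{F}_{3^m}+u^2\mathbb{F}_{3^m}=\mathbb{F}_{3^m}[u]/(u^3-1)$. Every element of $\mathcal{R}$ can be written uniquely as $x_1+x_2(u-1)+x_3(u-1)^2$ with $x_1,x_2,x_3\in\mathbb{F}_{3^m}$; it is a unit iff $x_1\neq 0$, and $\mathcal{R}^*$ denotes the group of units. Define $Tr:\mathcal{R}\to R$ by $Tr(a+ub+u^2c)=tr(a)+u\,tr(b)+u^2tr(c)$ for $a,b,c\in\mathbb{F}_{3^m}$, where $tr$ is the absolute trace from $\mathbb{F}_{3^m}$ to $\mathbb{F}_3$. Let $\mathcal{Q}$ be the set of nonzero squares of $\mathbb{F}_{3^m}$ and $L'=\{x_1+x_2(u-1)+x_3(u-1)^2: x_1\in\mathcal{Q},\ x_2,x_3\in\mathbb{F}_{3^m}\}$, a subgroup of index $2$ of $\mathcal{R}^*$. *)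

From HB Require Import structures.
From mathcomp Require Import all_boot all_order all_algebra all_field.
Set Implicit Arguments. Unset Strict Implicit. Unset Printing Implicit Defensive.
Import GRing.Theory.
Local Open Scope ring_scope.

(* The ring  calR = F[u]/(u^3 - 1), F = F_{3^m}; an element  a + u b + u^2 c
   is represented by the triple (a, b, c). *)
Definition calR (F : finFieldType) := (F * F * F)%type.

Definition mkR (F : finFieldType) (a b c : F) : calR F := (a, b, c).
Definition c0 (F : finFieldType) (x : calR F) : F := x.1.1.
Definition c1 (F : finFieldType) (x : calR F) : F := x.1.2.
Definition c2 (F : finFieldType) (x : calR F) : F := x.2.

Definition zeroR (F : finFieldType) : calR F := mkR 0 0 0.
Definition oneR (F : finFieldType) : calR F := mkR 1 0 0.
Definition uR (F : finFieldType) : calR F := mkR 0 1 0.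
Definition addR (F : finFieldType) (x y : calR F) : calR F :=
  mkR (c0 x + c0 y) (c1 x + c1 y) (c2 x + c2 y).
Definition scaleR (F : finFieldType) (k : F) (x : calR F) : calR F :=
  mkR (k * c0 x) (k * c1 x) (k * c2 x).
(* multiplication using u^3 = 1 *)
Definition mulR (F : finFieldType) (x y : calR F) : calR F :=
  mkR (c0 x * c0 y + c1 x * c2 y + c2 x * c1 y)
      (c0 x * c1 y + c1 x * c0 y + c2 x * c2 y)
      (c0 x * c2 y + c1 x * c1 y + c2 x * c0 y).

Definition uMinus1 (F : finFieldType) : calR F := addR (uR F) (scaleR (-1) (oneR F)).
Definition ofU1 (F : finFieldType) (x1 x2 x3 : F) : calR F :=
  addR (scaleR x1 (oneR F))
   (addR (scaleR x2 (uMinus1 F)) (scaleR x3 (mulR (uMinus1 F) (uMinus1 F)))).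

Definition unitR (F : finFieldType) (x : calR F) : Prop :=
  exists y : calR F, mulR x y = oneR F.

Definition nzsquare (F : finFieldType) (x : F) : Prop :=
  exists y : F, y != 0 /\ x = y ^+ 2.

Definition Lprime (F : finFieldType) (x : calR F) : Prop :=
  exists x1 x2 x3 : F, nzsquare x1 /\ x = ofU1 x1 x2 x3.

(* absolute trace F_{3^m} -> F_3, with values viewed inside F
   (the prime subfield F_3 of F) *)
Definition trF (F : finFieldType) (m : nat) (x : F) : F :=
  \sum_(i < m) x ^+ (3 ^ i).

(* Tr : calR -> R = F_3[u]/(u^3-1), with R viewed as a subring of calR *)
Definition TrR (F : finFieldType) (m : nat) (x : calR F) : calR F :=
  mkR (trF m (c0 x)) (trF m (c1 x)) (trF m (c2 x)).

(** The scalars [y^2] lie in both L' (for y != 0) and calR^*, and multiplying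
    by a scalar acts coordinatewise, so each coordinate b of a satisfies
    [tr (y^2 b) = 0] for every y in F_{3^m}.  As a function of y this is the
    polynomial [sum_(i < m) b^(3^i) X^(2 3^i)] of degree [2 3^(m-1) < 3^m];
    vanishing on all of F, it is the zero polynomial, and its leading
    coefficient [b^(3^(m-1))] shows b = 0. *)
From mathcomp Require Import all_boot all_order all_algebra all_field.
Set Implicit Arguments. Unset Strict Implicit. Unset Printing Implicit Defensive.
Local Open Scope ring_scope.
Import GRing.Theory.

Section TraceOfSquares.

Variable F : finFieldType.

Lemma trF0 (m : nat) : trF m (0 : F) = 0.
Proof. by rewrite /trF big1 // => i _; rewrite expr0n expn_eq0. Qed.

Definition trF_sqr_poly (m : nat) (b : F) : {poly F} :=
  \sum_(i < m) b ^+ (3 ^ i) *: 'X^(2 * 3 ^ i).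

Lemma horner_trF_sqr_poly (m : nat) (b y : F) :
  (trF_sqr_poly m b).[y] = trF m (y ^+ 2 * b).
Proof.
rewrite horner_sum /trF; apply: eq_bigr => i _.
by rewrite hornerZ hornerXn exprMn -exprM mulrC.
Qed.

Lemma size_trF_sqr_poly (n : nat) (b : F) :
  (size (trF_sqr_poly n.+1 b) <= (2 * 3 ^ n).+1)%N.
Proof.
apply: leq_trans (size_sum _ _ _) _; apply/bigmax_leqP => i _.
apply: leq_trans (size_scale_leq _ _) _.
by rewrite size_polyXn ltnS leq_mul2l leq_pexp2l // -ltnS.
Qed.

Lemma coef_trF_sqr_poly_top (n : nat) (b : F) :
  (trF_sqr_poly n.+1 b)`_(2 * 3 ^ n) = b ^+ (3 ^ n).
Proof.
rewrite coef_sum (bigD1 ord_max) //= coefZ coefXn eqxx mulr1 big1 ?addr0 //.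
move=> i /eqP i_neq_max; rewrite coefZ coefXn eqn_pmul2l // eqn_exp2l //.
suff /negPf-> : n != i by rewrite mulr0.
by apply/eqP => n_eq_i; apply: i_neq_max; apply: val_inj.
Qed.

Lemma trF_sqr_mul_eq0 (n : nat) (b : F) : (2 * 3 ^ n < #|F|)%N ->
  (forall y : F, trF n.+1 (y ^+ 2 * b) = 0) -> b = 0.
Proof.
move=> small_deg trF_eq0.
have poly_eq0 : trF_sqr_poly n.+1 b = 0.
  apply: (@roots_geq_poly_eq0 _ _ (enum F)); last 1 first.
  - by rewrite -cardE (leq_trans (size_trF_sqr_poly n b)).
  - by apply/allP => y _; rewrite /root horner_trF_sqr_poly trF_eq0.
  - exact: enum_uniq.
have := coef_trF_sqr_poly_top n b; rewrite poly_eq0 coef0 => /esym/eqP.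
by rewrite expf_eq0 => /andP[_ /eqP].
Qed.

End TraceOfSquares.

Section ScalarsOfCalR.

Variable F : finFieldType.

Lemma mulR_const (a : calR F) (k : F) : mulR a (mkR k 0 0) = scaleR k a.
Proof.
by rewrite /mulR /scaleR /c0 /c1 /c2 /mkR /= !mulr0 !addr0 !add0r !(mulrC k).
Qed.

Lemma Lprime_const_sqr (y : F) : y != 0 -> Lprime (mkR (y ^+ 2) 0 0).
Proof.
move=> y_neq0; exists (y ^+ 2), 0, 0; split; first by exists y.
by rewrite /ofU1 /addR /scaleR /c0 /c1 /c2 /mkR /= !mul0r !mulr0 !mulr1 !addr0.
Qed.

Lemma unitR_const (k : F) : k != 0 -> unitR (mkR k 0 0).
Proof.
move=> k_neq0; exists (mkR k^-1 0 0).
by rewrite mulR_const /scaleR /c0 /c1 /c2 /mkR /oneR /= mulVf // !mulr0.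
Qed.

End ScalarsOfCalR.

Theorem lemma3p1 (F : finFieldType) (m : nat) (hm : (1 <= m)%N)
  (hF : #|F| = (3 ^ m)%N) (useLprime : bool) (a : calR F) :
  (forall x : calR F,
     (if useLprime then Lprime x else unitR x) ->
     TrR m (mulR a x) = zeroR F) ->
  a = zeroR F.
Proof.
move=> TrR_eq0.
have TrR_sqr_eq0 (y : F) : TrR m (scaleR (y ^+ 2) a) = zeroR F.
  have [->|y_neq0] := eqVneq y 0.
    by rewrite /TrR /scaleR /c0 /c1 /c2 /mkR /= expr0n /= !mul0r trF0.
  rewrite -mulR_const; apply: TrR_eq0; case: useLprime.
  - exact: Lprime_const_sqr.
  - by apply: unitR_const; rewrite expf_neq0.
case: m hm hF TrR_eq0 TrR_sqr_eq0 => // n _ hF _ TrR_sqr_eq0.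
have small_deg : (2 * 3 ^ n < #|F|)%N by rewrite hF expnS ltn_mul2r expn_gt0.
case: a TrR_sqr_eq0 => [[a0 a1] a2] TrR_sqr_eq0.
rewrite /zeroR /mkR; congr (_, _, _); apply: (trF_sqr_mul_eq0 small_deg) => y;
  by case: (TrR_sqr_eq0 y).
Qed.
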